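(* Let $X,Y$ be random variables with $\mathrm{Supp}(X)\subseteq\mathrm{Supp}(Y)=\{x_1,x_2,x_3\}$ (three distinct points). If $(X,Y)\in\mathrm{IC}$, then $X$ and $Y$ have the same distribution or $\mathrm{Corr}(X,Y)=0$.
   Context: $\mathrm{Supp}(X)=\{x:\mathbb P(x-\epsilon<X\le x+\epsilon)>0\ \forall\epsilon>0\}$. $\mathcal L^2$ is the set of non-degenerate real random variables with finite variance. $(X,Y)\in\mathrm{IC}_r$ means $X,Y\in\mathcal L^2$ and $\mathrm{Corr}(X,Y)=\mathrm{Corr}(g(X),g(Y))=r$ for every measurable $g$ with $g(X),g(Y)\in\mathcal L^2$; $\mathrm{IC}=\bigcup_{r\in[-1,1]}\mathrm{IC}_r$. *)

From HB Require Import structures.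
From mathcomp Require Import all_boot all_order all_algebra.
From mathcomp Require Import all_classical all_reals all_analysis.
Set Implicit Arguments. Unset Strict Implicit. Unset Printing Implicit Defensive.
Import Order.TTheory GRing.Theory Num.Theory.
Local Open Scope classical_set_scope.
Local Open Scope ring_scope.

Section defs.
Context {d : measure_display} {T : measurableType d} {R : realType}.
Variable P : probability T R.

Definition Supp (X : T -> R) : set R :=
  [set x : R | forall e : R, 0 < e ->
     (0 < P (X @^-1` `](x - e)%R, (x + e)%R]))%E].

Definition nondegenerate (X : T -> R) : Prop :=
  ~ (exists c : R, P (X @^-1` [set c]) = 1%E).

Definition L2 (X : T -> R) : Prop :=
  X \in Lfun P 2%:E /\ nondegenerate X.

Definition Corr (X Y : T -> R) : R :=
  fine (covariance P X Y) /
    Num.sqrt (fine (variance P X) * fine (variance P Y)).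

Definition IC_r (r : R) (X Y : T -> R) : Prop :=
  L2 X /\ L2 Y /\ Corr X Y = r /\
  (forall g : R -> R, measurable_fun setT g ->
     L2 (g \o X) -> L2 (g \o Y) -> Corr (g \o X) (g \o Y) = r).

Definition IC (X Y : T -> R) : Prop :=
  exists r : R, -1 <= r <= 1 /\ IC_r r X Y.

Definition same_distribution (X Y : T -> R) : Prop :=
  forall A : set R, measurable A -> P (X @^-1` A) = P (Y @^-1` A).

End defs.

From Pilot Require Import Defs.
From HB Require Import structures.
From mathcomp Require Import all_boot all_order all_algebra.
From mathcomp Require Import all_classical all_reals all_analysis.
From mathcomp Require Import ring lra measurable_realfun.
Import Order.TTheory GRing.Theory Num.Theory numFieldNormedType.Exports.
Set Implicit Arguments. Unset Strict Implicit. Unset Printing Implicit Defensive.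
Local Open Scope classical_set_scope.
Local Open Scope ring_scope.

(* Let p be the joint law of (X, Y) on the three support points and P, Q its
   marginals; every Q_i is positive because Supp Y has three points.  Test the
   IC property on the functions taking the values 0, 1, t at x1, x2, x3: for
   t <> 0, 1 they are injective, so if the common correlation r is not 0 then
   cov(t)^2 = r^2 varY(t) varX(t), first off {0, 1} and hence identically, for
   quadratics cov, varX, varY in t.  As varY has a positive leading
   coefficient and a negative discriminant, it is irreducible; dividing cov^2,
   it divides cov, whence varX = l varY.  Comparing coefficients,
   P_i P_j = l Q_i Q_j for i <> j; since X is not a point mass, l <> 0, and
   this forces P = Q. *)

Section quadratic_identities.
Variable R : realFieldType.

Lemma quartic_coef_eq0 (f0 f1 f2 f3 f4 : R) :
  (forall t, t != 0 -> t != 1 ->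
     f0 + f1 * t + f2 * t ^+ 2 + f3 * t ^+ 3 + f4 * t ^+ 4 = 0) ->
  [/\ f0 = 0, f1 = 0, f2 = 0, f3 = 0 & f4 = 0].
Proof.
move=> f_eq0.
have f_eq0' t : t < 0 \/ 1 < t ->
    f0 + f1 * t + f2 * t ^+ 2 + f3 * t ^+ 3 + f4 * t ^+ 4 = 0.
  by move=> t_out; apply: f_eq0; apply/eqP => t_eq; lra.
have := f_eq0' (-1) ltac:(lra); have := f_eq0' (-2) ltac:(lra).
have := f_eq0' (-3) ltac:(lra); have := f_eq0' 2 ltac:(lra).
have := f_eq0' 3 ltac:(lra).
by move=> *; split; lra.
Qed.

Lemma sqr_quadratic_eq_extend (a0 a1 a2 b0 b1 b2 c0 c1 c2 k : R) :
  (forall t, t != 0 -> t != 1 -> (c0 + c1 * t + c2 * t ^+ 2) ^+ 2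
     = k * (a0 + a1 * t + a2 * t ^+ 2) * (b0 + b1 * t + b2 * t ^+ 2)) ->
  forall t, (c0 + c1 * t + c2 * t ^+ 2) ^+ 2
     = k * (a0 + a1 * t + a2 * t ^+ 2) * (b0 + b1 * t + b2 * t ^+ 2).
Proof.
move=> eq_t t; apply/eqP; rewrite -subr_eq0; apply/eqP.
have [] := @quartic_coef_eq0 (c0 ^+ 2 - k * a0 * b0)
  (2 * c0 * c1 - k * (a0 * b1 + a1 * b0))
  (c1 ^+ 2 + 2 * c0 * c2 - k * (a0 * b2 + a1 * b1 + a2 * b0))
  (2 * c1 * c2 - k * (a1 * b2 + a2 * b1)) (c2 ^+ 2 - k * a2 * b2).
  by move=> s s0 s1; move/eqP: (eq_t s s0 s1); rewrite -subr_eq0 => /eqP <-; ring.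
move=> e0 e1 e2 e3 e4.
transitivity ((c0 ^+ 2 - k * a0 * b0) + (2 * c0 * c1 - k * (a0 * b1 + a1 * b0)) * t
  + (c1 ^+ 2 + 2 * c0 * c2 - k * (a0 * b2 + a1 * b1 + a2 * b0)) * t ^+ 2
  + (2 * c1 * c2 - k * (a1 * b2 + a2 * b1)) * t ^+ 3
  + (c2 ^+ 2 - k * a2 * b2) * t ^+ 4); first by ring.
by rewrite e0 e1 e2 e3 e4; ring.
Qed.

Lemma sqr_even_quadratic_proportional (e a2 b0 b1 b2 c0 c1 c2 k : R) :
  0 < e -> 0 < a2 -> 0 < k ->
  (forall s, (c0 + c1 * s + c2 * s ^+ 2) ^+ 2
     = k * (e + a2 * s ^+ 2) * (b0 + b1 * s + b2 * s ^+ 2)) ->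
  b1 = 0 /\ b0 * a2 = e * b2.
Proof.
move=> e_gt0 a2_gt0 k_gt0 eq_s.
have [f0 f1 f2 f3 f4] : [/\ c0 ^+ 2 = k * e * b0, 2 * c0 * c1 = k * e * b1,
    c1 ^+ 2 + 2 * c0 * c2 = k * (e * b2 + a2 * b0), 2 * c1 * c2 = k * a2 * b1
  & c2 ^+ 2 = k * a2 * b2].
  have [] := @quartic_coef_eq0 (c0 ^+ 2 - k * e * b0) (2 * c0 * c1 - k * e * b1)
    (c1 ^+ 2 + 2 * c0 * c2 - k * (e * b2 + a2 * b0)) (2 * c1 * c2 - k * a2 * b1)
    (c2 ^+ 2 - k * a2 * b2).
    by move=> s _ _; move/eqP: (eq_s s); rewrite -subr_eq0 => /eqP <-; ring.
  by move=> *; split; apply/eqP; rewrite -subr_eq0; apply/eqP.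
(* Over C, c would vanish at the roots of e + a2 s^2; over R this reads c1 = 0 = D. *)
pose D := a2 * c0 - e * c2.
have c1D : c1 * D = 0.
  have : 2 * (c1 * D) = a2 * (2 * c0 * c1) - e * (2 * c1 * c2) by rewrite /D; ring.
  by rewrite f1 f3; lra.
have c1D2 : a2 * e * c1 ^+ 2 = D ^+ 2.
  have : a2 * e * c1 ^+ 2 - D ^+ 2
      = a2 * e * (c1 ^+ 2 + 2 * c0 * c2) - a2 ^+ 2 * c0 ^+ 2 - e ^+ 2 * c2 ^+ 2.
    by rewrite /D; ring.
  by rewrite f0 f2 f4; lra.
have c1_0 : c1 = 0.
  have : a2 * e * (c1 ^+ 2) ^+ 2 = (c1 * D) ^+ 2 by rewrite [RHS]exprMn -c1D2; ring.
  rewrite c1D expr0n /= => /eqP.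
  by rewrite !mulf_eq0 (gt_eqF a2_gt0) (gt_eqF e_gt0) /= !orbb => /eqP.
have D0 : D = 0 by apply/eqP; rewrite -sqrf_eq0 -c1D2 c1_0 expr0n /= mulr0.
split.
  move: f3; rewrite c1_0 mulr0 mul0r => /esym/eqP.
  by rewrite !mulf_eq0 (gt_eqF k_gt0) (gt_eqF a2_gt0) => /eqP.
have : k * e * a2 * (b0 * a2 - e * b2) = D * (a2 * c0 + e * c2).
  have -> : D * (a2 * c0 + e * c2) = a2 ^+ 2 * c0 ^+ 2 - e ^+ 2 * c2 ^+ 2.
    by rewrite /D; ring.
  by rewrite f0 f4; ring.
rewrite D0 mul0r => /eqP.
by rewrite !mulf_eq0 (gt_eqF k_gt0) (gt_eqF e_gt0) (gt_eqF a2_gt0) subr_eq0 => /eqP.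
Qed.

Lemma sqr_quadratic_proportional (a0 a1 a2 b0 b1 b2 c0 c1 c2 k : R) :
  0 < a2 -> a1 ^+ 2 < 4 * a0 * a2 -> 0 < k ->
  (forall t, (c0 + c1 * t + c2 * t ^+ 2) ^+ 2
     = k * (a0 + a1 * t + a2 * t ^+ 2) * (b0 + b1 * t + b2 * t ^+ 2)) ->
  exists l, [/\ b0 = l * a0, b1 = l * a1 & b2 = l * a2].
Proof.
move=> a2_gt0 disc_lt k_gt0 eq_t.
have a2_neq0 : a2 != 0 by rewrite gt_eqF.
(* Completing the square in the first factor reduces to the even case. *)
pose mu := - a1 / (2 * a2); pose e := a0 - a1 ^+ 2 / (4 * a2).
have e_gt0 : 0 < e.
  have -> : e = (4 * a0 * a2 - a1 ^+ 2) / (4 * a2) by rewrite /e; field.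
  by rewrite divr_gt0 ?subr_gt0 ?mulr_gt0.
pose b0' := b0 + b1 * mu + b2 * mu ^+ 2; pose b1' := b1 + 2 * b2 * mu.
pose c0' := c0 + c1 * mu + c2 * mu ^+ 2; pose c1' := c1 + 2 * c2 * mu.
have eq_shifted s : (c0' + c1' * s + c2 * s ^+ 2) ^+ 2
    = k * (e + a2 * s ^+ 2) * (b0' + b1' * s + b2 * s ^+ 2).
  transitivity ((c0 + c1 * (s + mu) + c2 * (s + mu) ^+ 2) ^+ 2).
    by rewrite /c0' /c1'; ring.
  rewrite eq_t (_ : a0 + _ + _ = e + a2 * s ^+ 2); last by rewrite /e /mu; field.
  by rewrite /b0' /b1'; ring.
have [b1'0 b0'E] := sqr_even_quadratic_proportional e_gt0 a2_gt0 k_gt0 eq_shifted.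
have b1E : b1 = b2 / a2 * a1.
  transitivity (b1 - b1'); first by rewrite b1'0 subr0.
  by rewrite /b1' /mu; field.
exists (b2 / a2); split=> //; last by rewrite mulfVK.
apply: (mulIf a2_neq0).
transitivity (b0' * a2 + b2 * a1 ^+ 2 / (4 * a2)); first by rewrite /b0' b1E /mu; field.
by rewrite b0'E /e; field.
Qed.

Lemma eq3_of_proportional_products (P0 P1 P2 Q0 Q1 Q2 l : R) :
  P0 + P1 + P2 = 1 -> Q0 + Q1 + Q2 = 1 ->
  Q0 != 0 -> Q1 != 0 -> Q2 != 0 -> l != 0 ->
  P0 * P1 = l * (Q0 * Q1) -> P0 * P2 = l * (Q0 * Q2) -> P1 * P2 = l * (Q1 * Q2) ->
  [/\ P0 = Q0, P1 = Q1 & P2 = Q2].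
Proof.
move=> sumP sumQ Q0_neq0 Q1_neq0 Q2_neq0 l_neq0 e01 e02 e12.
have prod_neq0 x y u v : x * y = l * (u * v) -> u != 0 -> v != 0 ->
    (x != 0) && (y != 0).
  by move=> xy u_neq0 v_neq0; rewrite -negb_or -mulf_eq0 xy !mulf_neq0.
have /andP[P0_neq0 P1_neq0] := prod_neq0 _ _ _ _ e01 Q0_neq0 Q1_neq0.
have /andP[_ P2_neq0] := prod_neq0 _ _ _ _ e02 Q0_neq0 Q2_neq0.
have r01 : P0 * Q1 = P1 * Q0.
  apply: (mulIf (mulf_neq0 P2_neq0 Q2_neq0)).
  have -> : P0 * Q1 * (P2 * Q2) = (P0 * P2) * (Q1 * Q2) by ring.
  have -> : P1 * Q0 * (P2 * Q2) = (P1 * P2) * (Q0 * Q2) by ring.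
  by rewrite e02 e12; ring.
have r02 : P0 * Q2 = P2 * Q0.
  apply: (mulIf (mulf_neq0 P1_neq0 Q1_neq0)).
  have -> : P0 * Q2 * (P1 * Q1) = (P0 * P1) * (Q1 * Q2) by ring.
  have -> : P2 * Q0 * (P1 * Q1) = (P1 * P2) * (Q0 * Q1) by ring.
  by rewrite e01 e12; ring.
have P0E : P0 = Q0.
  transitivity (P0 * Q0 + P0 * Q1 + P0 * Q2); first by rewrite -!mulrDr sumQ mulr1.
  by rewrite r01 r02 -!mulrDl sumP mul1r.
split=> //; apply: (mulIf Q0_neq0); first by rewrite -r01 P0E mulrC.
by rewrite -r02 P0E mulrC.
Qed.

Lemma eq3_of_proportional_cov (P0 P1 P2 Q0 Q1 Q2 l : R) :
  P0 + P1 + P2 = 1 -> Q0 + Q1 + Q2 = 1 ->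
  Q0 != 0 -> Q1 != 0 -> Q2 != 0 -> P0 != 1 -> P1 != 1 -> P2 != 1 ->
  P1 * (1 - P1) = l * (Q1 * (1 - Q1)) -> P1 * P2 = l * (Q1 * Q2) ->
  P2 * (1 - P2) = l * (Q2 * (1 - Q2)) ->
  [/\ P0 = Q0, P1 = Q1 & P2 = Q2].
Proof.
move=> sumP sumQ Q0_neq0 Q1_neq0 Q2_neq0 P0_neq1 P1_neq1 P2_neq1 e11 e12 e22.
have e01 : P0 * P1 = l * (Q0 * Q1).
  have -> : P0 * P1 = P1 * (1 - P1) - P1 * P2 by rewrite -sumP; ring.
  by rewrite e11 e12 -sumQ; ring.
have e02 : P0 * P2 = l * (Q0 * Q2).
  have -> : P0 * P2 = P2 * (1 - P2) - P1 * P2 by rewrite -sumP; ring.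
  by rewrite e22 e12 -sumQ; ring.
apply: (eq3_of_proportional_products sumP sumQ Q0_neq0 Q1_neq0 Q2_neq0 _ e01 e02 e12).
apply/eqP => l0; rewrite l0 !mul0r in e01 e02 e12.
have [P0_0|P0_neq0] := eqVneq P0 0.
  have /eqP : P1 * (1 - P1) = 0 by rewrite (_ : 1 - P1 = P2) //; lra.
  rewrite mulf_eq0 subr_eq0 (eq_sym 1) (negbTE P1_neq1) orbF => /eqP P1_0.
  by move: P2_neq1; rewrite (_ : P2 = 1) ?eqxx //; lra.
move/eqP: e01; rewrite mulf_eq0 (negbTE P0_neq0) /= => /eqP P1_0.
move/eqP: e02; rewrite mulf_eq0 (negbTE P0_neq0) /= => /eqP P2_0.
by move: P0_neq1; rewrite (_ : P0 = 1) ?eqxx //; lra.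
Qed.

End quadratic_identities.

Lemma sqr_of_div_sqrt (R : rcfType) (x y r : R) :
  r != 0 -> x / Num.sqrt y = r -> x ^+ 2 = r ^+ 2 * y.
Proof.
move=> r_neq0 xyr.
have sy_neq0 : Num.sqrt y != 0.
  by apply: contra_neq r_neq0 => sy0; rewrite -xyr sy0 invr0 mulr0.
have y_gt0 : 0 < y by rewrite ltNge -sqrtr_eq0.
by rewrite -xyr exprMn exprVn sqr_sqrtr ?ltW // divfK ?gt_eqF.
Qed.

Lemma big_ord3 (V : nmodType) (F : 'I_3 -> V) :
  \sum_i F i = F (inord 0) + F (inord 1) + F (inord 2).
Proof.
rewrite !big_ord_recl big_ord0 addr0 addrA.
by congr (F _ + F _ + F _); apply: val_inj; rewrite /= inordK.
Qed.

Section triple.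
Variables (V : eqType) (x1 x2 x3 : V).

Definition triple (i : 'I_3) : V := nth x1 [:: x1; x2; x3] i.

Lemma triple_inj : x1 != x2 -> x1 != x3 -> x2 != x3 -> injective triple.
Proof.
move=> n12 n13 n23 [[|[|[|i]]] ?] [[|[|[|j]]] ?] // eq_ij; apply: val_inj => //=;
  move: eq_ij; rewrite /triple /= => /eqP;
  by rewrite ?(eq_sym x2) ?(eq_sym x3) ?(negbTE n12) ?(negbTE n13) ?(negbTE n23).
Qed.

Lemma range_triple : range triple = [set x1; x2; x3].
Proof.
apply/seteqP; split => [_ [[[|[|[|//]]] ?] _ <-]|x]; rewrite /triple /=;
  [by left; left | by left; right | by right |].
by case=> [[->|->]|->]; [exists ord0 | exists (inord 1) | exists (inord 2)];
  rewrite //= inordK.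
Qed.

End triple.

Section joint_pmf.
Variables (R : rcfType) (I : finType) (p : I -> I -> R).

Definition pmf_mean (f : I -> I -> R) := \sum_i \sum_j f i j * p i j.

Definition pmf_cov (f g : I -> I -> R) :=
  pmf_mean (fun i j => (f i j - pmf_mean f) * (g i j - pmf_mean g)).

Definition pmf_corr (a : I -> R) :=
  pmf_cov (fun i _ => a i) (fun _ j => a j) /
  Num.sqrt (pmf_cov (fun i _ => a i) (fun i _ => a i) *
            pmf_cov (fun _ j => a j) (fun _ j => a j)).

Definition margX i := \sum_j p i j.
Definition margY j := \sum_i p i j.

Lemma pmf_meanX (c : I -> R) : pmf_mean (fun i _ => c i) = \sum_i c i * margX i.
Proof. by apply: eq_bigr => i _; rewrite mulr_sumr. Qed.

Lemma pmf_meanY (c : I -> R) : pmf_mean (fun _ j => c j) = \sum_j c j * margY j.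
Proof. by rewrite /pmf_mean exchange_big; apply: eq_bigr => j _; rewrite mulr_sumr. Qed.

End joint_pmf.

Section three_point_pmf.
Variables (R : rcfType) (p : 'I_3 -> 'I_3 -> R).
Hypothesis p_total : \sum_i \sum_j p i j = 1.

Local Notation P k := (margX p (inord k)).
Local Notation Q k := (margY p (inord k)).
Local Notation pp k l := (p (inord k) (inord l)).

Let p22E : pp 2 2 = 1 - (pp 0 0 + pp 0 1 + pp 0 2 + pp 1 0 + pp 1 1 + pp 1 2
                         + pp 2 0 + pp 2 1).
Proof. by move: p_total; rewrite !big_ord3; lra. Qed.

Lemma pmf_covX_triple t :
  pmf_cov p (fun i _ => triple 0 1 t i) (fun i _ => triple 0 1 t i)
  = P 1 * (1 - P 1) + (-2 * P 1 * P 2) * t + P 2 * (1 - P 2) * t ^+ 2.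
Proof. by rewrite /pmf_cov /pmf_mean /margX !big_ord3 /triple !inordK //= p22E; ring. Qed.

Lemma pmf_covY_triple t :
  pmf_cov p (fun _ j => triple 0 1 t j) (fun _ j => triple 0 1 t j)
  = Q 1 * (1 - Q 1) + (-2 * Q 1 * Q 2) * t + Q 2 * (1 - Q 2) * t ^+ 2.
Proof. by rewrite /pmf_cov /pmf_mean /margY !big_ord3 /triple !inordK //= p22E; ring. Qed.

Lemma pmf_covXY_triple t :
  pmf_cov p (fun i _ => triple 0 1 t i) (fun _ j => triple 0 1 t j)
  = (pp 1 1 - P 1 * Q 1) + (pp 1 2 + pp 2 1 - P 1 * Q 2 - P 2 * Q 1) * t
    + (pp 2 2 - P 2 * Q 2) * t ^+ 2.
Proof.
by rewrite /pmf_cov /pmf_mean /margX /margY !big_ord3 /triple !inordK //= p22E; ring.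
Qed.

Lemma pmf3_corr_constant r :
  (forall j, 0 < margY p j) -> (forall i, margX p i != 1) ->
  (forall a : 'I_3 -> R, injective a -> pmf_corr p a = r) ->
  r = 0 \/ margX p =1 margY p.
Proof.
move=> Q_gt0 P_neq1 corr_r.
have [->|r_neq0] := eqVneq r 0; [by left | right].
have sumP : P 0 + P 1 + P 2 = 1 by rewrite -big_ord3 -p_total.
have sumQ : Q 0 + Q 1 + Q 2 = 1 by rewrite -big_ord3 -p_total exchange_big.
have sqr_cov t : t != 0 -> t != 1 ->
    ((pp 1 1 - P 1 * Q 1) + (pp 1 2 + pp 2 1 - P 1 * Q 2 - P 2 * Q 1) * t
      + (pp 2 2 - P 2 * Q 2) * t ^+ 2) ^+ 2
    = r ^+ 2 * (Q 1 * (1 - Q 1) + (-2 * Q 1 * Q 2) * t + Q 2 * (1 - Q 2) * t ^+ 2)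
             * (P 1 * (1 - P 1) + (-2 * P 1 * P 2) * t + P 2 * (1 - P 2) * t ^+ 2).
  move=> t0 t1; rewrite -pmf_covXY_triple -pmf_covX_triple -pmf_covY_triple.
  rewrite -mulrA [_ * pmf_cov _ _ _]mulrC; apply: sqr_of_div_sqrt r_neq0 _.
  by apply: corr_r; apply: triple_inj => //; rewrite eq_sym ?oner_neq0.
have a2_gt0 : 0 < Q 2 * (1 - Q 2) by rewrite mulr_gt0 // -sumQ addrK addr_gt0.
have disc_lt : (-2 * Q 1 * Q 2) ^+ 2 < 4 * (Q 1 * (1 - Q 1)) * (Q 2 * (1 - Q 2)).
  rewrite -subr_gt0 (_ : _ - _ = 4 * Q 0 * Q 1 * Q 2) ?mulr_gt0 //.
  by rewrite (_ : Q 0 = 1 - Q 1 - Q 2); [ring | lra].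
have r2_gt0 : 0 < r ^+ 2 by rewrite exprn_even_gt0 //= r_neq0 orbT.
have [l [e0 e1 e2]] := sqr_quadratic_proportional a2_gt0 disc_lt r2_gt0
  (sqr_quadratic_eq_extend sqr_cov).
have Q_neq0 k : Q k != 0 by exact: lt0r_neq0.
have [P0E P1E P2E] := eq3_of_proportional_cov sumP sumQ (Q_neq0 0) (Q_neq0 1) (Q_neq0 2)
  (P_neq1 _) (P_neq1 _) (P_neq1 _) e0 ltac:(lra) e2.
by move=> i; rewrite -(inord_val i); case: i => [[|[|[|//]]] ?].
Qed.

End three_point_pmf.

Section real_line.
Variable R : realType.

Definition grid_cell (n : nat) (z : int) : set R :=
  `[z%:~R / n.+1%:R, (z + 1)%:~R / n.+1%:R[%classic.

Lemma grid_cell_near (x e : R) : 0 < e ->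
  exists n z, grid_cell n z x /\ grid_cell n z `<=` `]x - e, x + e]%classic.
Proof.
move=> e_gt0; pose n := Num.truncn e^-1; pose z := Num.floor (x * n.+1%:R).
have n_gt : e^-1 < n.+1%:R by apply: real_truncnS_gt; exact: num_real.
have width_lt : n.+1%:R^-1 < e by rewrite -(invrK e) ltf_pV2 ?posrE ?invr_gt0.
have lo : z%:~R / n.+1%:R <= x by rewrite ler_pdivrMr // real_floor_le // num_real.
have hi : x < (z + 1)%:~R / n.+1%:R.
  by rewrite ltr_pdivlMr // real_floorD1_gt // num_real.
have width : (z + 1)%:~R / n.+1%:R = z%:~R / n.+1%:R + n.+1%:R^-1 :> R.
  by rewrite intrD mulrDl div1r.
exists n, z; split; first by rewrite /grid_cell /= in_itv /= lo hi.
move=> y; rewrite /grid_cell /= !in_itv /= width => /andP[y_lo y_hi].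
move: hi; rewrite width => hi.
set a := z%:~R / n.+1%:R in lo hi y_lo y_hi *.
set w := n.+1%:R^-1 in hi y_hi width_lt *.
by apply/andP; split; lra.
Qed.

Lemma finite_set_closed (S : set R) : finite_set S -> closed S.
Proof.
by apply: (@accessible_finite_set_closed R).1; exact: hausdorff_accessible (@Rhausdorff R).
Qed.

End real_line.

Section probability_space.
Context d (T : measurableType d) (R : realType) (P : probability T R).

Lemma preimage_measurable (Z : T -> R) (A : set R) :
  measurable_fun setT Z -> measurable A -> measurable (Z @^-1` A).
Proof. by move=> mZ mA; rewrite -[Z @^-1` A]setTI; exact: mZ. Qed.

Lemma Lfun2_bounded (f : T -> R) (M : R) :
  measurable_fun setT f -> (forall w, `|f w| <= M) -> f \in Lfun P 2%:E.
Proof.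
move=> mf fM; rewrite inE; apply/andP; split; first by rewrite inE.
rewrite inE /= /finite_norm unlock poweR_lty //.
apply: (@le_lt_trans _ _ (\int[P]_x (M `^ 2)%:E)%E).
  apply: ge0_le_integral => //.
  - by move=> x _; apply: poweR_ge0.
  - apply: measurableT_comp => //.
    change (measurable_fun setT ((@powR R ^~ 2) \o ((@Num.norm _ R) \o f))).
    apply: measurableT_comp; first exact: measurable_powR.
    exact: measurableT_comp.
  - move=> x _; change ((`|f x| `^ 2)%:E <= (M `^ 2)%:E)%E; rewrite lee_fin.
    by apply: ge0_ler_powR => //; rewrite ?nnegrE //; exact: le_trans (fM x).
by rewrite integral_cst //= probability_setT mule1; exact: ltry.
Qed.

Lemma nondegenerate_comp (Z : T -> R) (g : R -> R) (S : set R) :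
  measurable_fun setT Z -> measurable_fun setT g -> measurable S ->
  P (Z @^-1` ~` S) = 0%E -> {in S &, injective g} ->
  Defs.nondegenerate P Z -> Defs.nondegenerate P (g \o Z).
Proof.
move=> mZ mg mS ZS g_inj nZ [c gZc]; apply: nZ.
have mgZc := preimage_measurable (measurableT_comp mg mZ) (measurable_set1 c).
have mZS := preimage_measurable mZ (measurableC mS).
have [[s Ss gsc]|no_s] := pselect (exists2 s, S s & g s = c); last first.
  have : (P ((g \o Z) @^-1` [set c]) <= P (Z @^-1` ~` S))%E.
    by apply: le_measure; rewrite ?inE // => w /= gZw SZw; apply: no_s; exists (Z w).
  by rewrite gZc ZS lee_fin ler10.
exists s; have mZs := preimage_measurable mZ (measurable_set1 s).
have gZc_negl : P.-negligible (~` ((g \o Z) @^-1` [set c])).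
  exists (~` ((g \o Z) @^-1` [set c])); split => //; first exact: measurableC.
  by rewrite probability_setC // gZc subee.
have : P.-negligible (~` (Z @^-1` [set s])).
  apply: negligibleS (negligibleU gZc_negl ((negligibleP _ mZS).2 ZS)) => w /= Zw_neq_s.
  have [SZw|] := pselect (S (Z w)); last by right.
  by left => gZw; apply: Zw_neq_s; apply: g_inj; rewrite ?inE // gZw gsc.
move/(negligibleP _ (measurableC mZs)) => Zs_null.
rewrite -[Z @^-1` _]setCK probability_setC; last exact: measurableC.
by rewrite (_ : P _ = 0%E) ?sube0.
Qed.

Lemma negligible_compl_Supp (Z : T -> R) :
  measurable_fun setT Z -> P.-negligible (Z @^-1` ~` Supp P Z).
Proof.
move=> mZ.
have mcell n z : measurable (Z @^-1` grid_cell n z).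
  exact: preimage_measurable mZ (measurable_itv _).
(* The grid cells of null preimage form a countable cover of the complement of the support. *)
pose null_cell n z : set T :=
  if P (Z @^-1` grid_cell n z) == 0%E then Z @^-1` grid_cell n z else set0.
have null_cell_negl n z : P.-negligible (null_cell n z).
  rewrite /null_cell; case: ifPn => [/eqP cell0|_]; last exact: negligible_set0.
  exact/(negligibleP _ (mcell n z)).
apply: (negligibleS _ (negligible_bigcup (fun n => negligibleU
  (negligible_bigcup (fun m => null_cell_negl n (Posz m)))
  (negligible_bigcup (fun m => null_cell_negl n (Negz m)))))).
move=> w /= not_Supp.
have [e e_gt0 Pe] :
    exists2 e : R, 0 < e & P (Z @^-1` `]Z w - e, Z w + e]%classic) = 0%E.
  apply: contrapT => Pe_pos; apply: not_Supp => e e_gt0.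
  by rewrite lt0e measure_ge0 andbT; apply/eqP => Pe; apply: Pe_pos; exists e.
have [n [z [cell_w cell_sub]]] := grid_cell_near (Z w) e_gt0.
have cell0 : P (Z @^-1` grid_cell n z) = 0%E.
  apply/eqP; rewrite -measure_le0 -Pe; apply: le_measure; rewrite ?inE //.
    exact: preimage_measurable mZ (measurable_itv _).
  by move=> u /cell_sub.
have w_null : null_cell n z w by rewrite /null_cell cell0 eqxx.
by exists n => //; case: z w_null {cell_w cell_sub cell0} => m w_null; [left | right]; exists m.
Qed.

Lemma Supp_sub_null_compl (Z : T -> R) (S : set R) :
  measurable_fun setT Z -> measurable S -> Supp P Z `<=` S -> P (Z @^-1` ~` S) = 0%E.
Proof.
move=> mZ mS SuppS; apply/(negligibleP _ (preimage_measurable mZ (measurableC mS))).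
by apply: negligibleS (negligible_compl_Supp mZ) => w /= notS /SuppS.
Qed.

Lemma Supp_atom_gt0 (Z : T -> R) (S : set R) (x : R) :
  measurable_fun setT Z -> finite_set S -> P (Z @^-1` ~` S) = 0%E ->
  Supp P Z x -> (0 < P (Z @^-1` [set x]))%E.
Proof.
move=> mZ finS ZS Supp_x.
have [e /= e_gt0 ball_e] : nbhs_ball x (~` (S `\ x)).
  apply/nbhs_ballP; apply: open_nbhs_nbhs; split; last by case=> _; apply.
  by apply: closed_openC; apply: finite_set_closed; exact: finite_setD.
have near_x : `]x - e / 2, x + e / 2]%classic `<=` [set x] `|` ~` S.
  move=> y; rewrite /= in_itv /= => /andP[y_lo y_hi].
  have [->|y_neq_x] := eqVneq y x; [by left | right => Sy].
  apply: (ball_e y); last by split => //; exact/eqP.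
  by rewrite -ball_normE /ball_ /= ltr_distlC; apply/andP; split; lra.
have mZx := preimage_measurable mZ (measurable_set1 x).
have mZS : measurable (Z @^-1` ~` S).
  exact: preimage_measurable mZ (measurableC (closed_measurable (finite_set_closed finS))).
have /lt_le_trans := Supp_x _ (divr_gt0 e_gt0 (ltr0Sn _ 1)); apply.
apply: (@le_trans _ _ (P ((Z @^-1` [set x]) `|` (Z @^-1` ~` S)))).
  apply: le_measure; rewrite ?inE; last by move=> w /near_x.
  - exact: preimage_measurable mZ (measurable_itv _).
  - exact: measurableU.
apply: le_trans (measureU2 _ mZx mZS) _.
by rewrite [X in (_ + X <= _)%E](_ : _ = 0%E) ?adde0 //; exact: ZS.
Qed.

End probability_space.

Section finite_valued_pair.
Context d (T : measurableType d) (R : realType) (P : probability T R).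
Variables (I : finType) (xs : I -> R) (X Y : T -> R).
Hypotheses (xs_inj : injective xs).
Hypotheses (mX : measurable_fun setT X) (mY : measurable_fun setT Y).
Hypotheses (X_xs : P (X @^-1` ~` range xs) = 0%E) (Y_xs : P (Y @^-1` ~` range xs) = 0%E).

Definition joint_pmf (i j : I) : R :=
  fine (P (X @^-1` [set xs i] `&` Y @^-1` [set xs j])).

Let cell (ij : I * I) := X @^-1` [set xs ij.1] `&` Y @^-1` [set xs ij.2].

Let measurable_cell ij : measurable (cell ij).
Proof.
by apply: measurableI; [exact: preimage_measurable mX (measurable_set1 _)
                       | exact: preimage_measurable mY (measurable_set1 _)].
Qed.

Let indic_cell w i j ij :
  xs i = X w -> xs j = Y w -> \1_(cell ij) w = (ij == (i, j))%:R :> R.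
Proof.
move=> Xw Yw; rewrite indicE; suff -> : (w \in cell ij) = (ij == (i, j)) by [].
case: ij => i' j'; apply/idP/eqP => [/set_mem[/=]|[-> ->]]; last by apply/mem_set.
by rewrite -Xw -Yw => /xs_inj -> /xs_inj ->.
Qed.

Let indic_xs i k : \1_[set xs i] (xs k) = (i == k)%:R :> R.
Proof.
rewrite indicE; suff -> : (xs k \in [set xs i]) = (i == k) by [].
by apply/idP/eqP => [/set_mem/xs_inj ->|->]; last exact/mem_set.
Qed.

Let measurable_range : measurable (range xs).
Proof.
apply: closed_measurable; apply: finite_set_closed; apply: finite_image.
exact: finite_finset.
Qed.

Let outside_negligible :
  P.-negligible ((X @^-1` ~` range xs) `|` (Y @^-1` ~` range xs)).
Proof.
apply: negligibleU.
  exact/(negligibleP _ (preimage_measurable mX (measurableC measurable_range))).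
exact/(negligibleP _ (preimage_measurable mY (measurableC measurable_range))).
Qed.

Lemma expectation_joint (F : T -> R) (h : R -> R -> R) :
  measurable_fun setT F -> (forall w, F w = h (X w) (Y w)) ->
  ('E_P[F])%E = (pmf_mean joint_pmf (fun i j => h (xs i) (xs j)))%:E.
Proof.
move=> mF Fh; rewrite unlock (ae_eq_integral (mu := P) (D := setT)
  (fun w => \sum_(ij : I * I) (h (xs ij.1) (xs ij.2) * \1_(cell ij) w)%:E)) //.
- rewrite integral_sum //; last first.
    move=> ij; under eq_fun do rewrite EFinM.
    by apply: integrableZl => //; exact: integrable_indic.
  rewrite /pmf_mean pair_big -sumEFin; apply: eq_bigr => -[i j] _ /=.
  under eq_integral do rewrite EFinM.
  rewrite integralZl //; last exact: integrable_indic.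
  rewrite integral_indic // setIT EFinM /joint_pmf fineK //.
  exact: fin_num_measure (measurable_cell (i, j)).
- exact/measurable_EFinP.
- apply: emeasurable_sum => ij; apply/measurable_EFinP.
  by apply: measurable_funM => //; exact: measurable_indic.
- apply: (negligibleS _ outside_negligible) => w /= F_neq; apply: contrapT => w_in.
  have [[i _ Xw] [j _ Yw]] : range xs (X w) /\ range xs (Y w).
    by split; apply: contrapT => w_out; apply: w_in; [left | right].
  apply: F_neq => _; have cell_w ij := indic_cell ij Xw Yw.
  rewrite sumEFin Fh -Xw -Yw (bigD1 (i, j)) //= cell_w eqxx mulr1 big1 ?addr0 //.
  by move=> ij /negbTE ij_neq; rewrite cell_w ij_neq mulr0.
Qed.

Lemma joint_pmf_total : \sum_i \sum_j joint_pmf i j = 1.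
Proof.
have := expectation_joint (h := fun _ _ => 1) (measurable_cst (1 : R)) (fun _ => erefl).
rewrite expectation_cst => -[->].
by apply: eq_bigr => i _; apply: eq_bigr => j _; rewrite mul1r.
Qed.

Lemma probability_preimageX (A : set R) : measurable A ->
  P (X @^-1` A) = (\sum_i \1_A (xs i) * margX joint_pmf i)%:E.
Proof.
move=> mA; have mXA := preimage_measurable mX mA.
by rewrite -expectation_indic // (expectation_joint (h := fun u _ => \1_A u)) ?pmf_meanX.
Qed.

Lemma probability_preimageY (A : set R) : measurable A ->
  P (Y @^-1` A) = (\sum_j \1_A (xs j) * margY joint_pmf j)%:E.
Proof.
move=> mA; have mYA := preimage_measurable mY mA.
by rewrite -expectation_indic // (expectation_joint (h := fun _ v => \1_A v)) ?pmf_meanY.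
Qed.

Lemma probability_atomX k : P (X @^-1` [set xs k]) = (margX joint_pmf k)%:E.
Proof.
rewrite probability_preimageX //; congr (_%:E).
rewrite (bigD1 k) //= indic_xs eqxx mul1r big1 ?addr0 // => i ik.
by rewrite indic_xs eq_sym (negbTE ik) mul0r.
Qed.

Lemma probability_atomY k : P (Y @^-1` [set xs k]) = (margY joint_pmf k)%:E.
Proof.
rewrite probability_preimageY //; congr (_%:E).
rewrite (bigD1 k) //= indic_xs eqxx mul1r big1 ?addr0 // => i ik.
by rewrite indic_xs eq_sym (negbTE ik) mul0r.
Qed.

Lemma same_distribution_of_marg :
  margX joint_pmf =1 margY joint_pmf -> same_distribution P X Y.
Proof.
move=> eq_marg A mA; rewrite probability_preimageX // probability_preimageY //.
by congr (_%:E); apply: eq_bigr => i _; rewrite eq_marg.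
Qed.

Lemma covariance_joint (F G : T -> R) (u v : R -> R -> R) :
  measurable_fun setT F -> measurable_fun setT G ->
  (forall w, F w = u (X w) (Y w)) -> (forall w, G w = v (X w) (Y w)) ->
  covariance P F G = (pmf_cov joint_pmf (fun i j => u (xs i) (xs j))
                                        (fun i j => v (xs i) (xs j)))%:E.
Proof.
move=> mF mG Fu Gv.
rewrite covariance.unlock (expectation_joint mF Fu) (expectation_joint mG Gv) /=.
apply: (expectation_joint (h := fun x y => (u x y - _) * (v x y - _))).
  by apply: measurable_funM; apply: measurable_funB.
by move=> w; rewrite -Fu -Gv.
Qed.

Lemma Corr_comp_joint (g : R -> R) : measurable_fun setT g ->
  Corr P (g \o X) (g \o Y) = pmf_corr joint_pmf (g \o xs).
Proof.
move=> mg; have mgX := measurableT_comp mg mX; have mgY := measurableT_comp mg mY.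
rewrite /Corr /variance.
rewrite (covariance_joint (u := fun x _ => g x) (v := fun _ y => g y) mgX mgY
  (fun _ => erefl) (fun _ => erefl)).
rewrite (covariance_joint (u := fun x _ => g x) (v := fun x _ => g x) mgX mgX
  (fun _ => erefl) (fun _ => erefl)).
by rewrite (covariance_joint (u := fun _ y => g y) (v := fun _ y => g y) mgY mgY
  (fun _ => erefl) (fun _ => erefl)).
Qed.

Lemma IC_r_pmf_corr r : IC_r P r X Y ->
  forall a : I -> R, injective a -> pmf_corr joint_pmf a = r.
Proof.
move=> [[_ nX] [[_ nY] [_ corr_r]]] a a_inj.
pose g x := \sum_i a i * \1_[set xs i] x.
have g_xs k : g (xs k) = a k.
  rewrite /g (bigD1 k) //= indic_xs eqxx mulr1 big1 ?addr0 // => i /negbTE ik.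
  by rewrite indic_xs ik mulr0.
have mg : measurable_fun setT g.
  by apply: measurable_sum => i; apply: measurable_funM => //; exact: measurable_indic.
have g_bound x : `|g x| <= \sum_i `|a i|.
  apply: le_trans (ler_norm_sum _ _ _) _; apply: ler_sum => i _.
  by rewrite normrM indicE; case: (_ \in _); rewrite ?normr1 ?normr0 ?mulr1 ?mulr0.
have g_inj : {in range xs &, injective g}.
  by move=> _ _ /set_mem[i _ <-] /set_mem[j _ <-]; rewrite !g_xs => /a_inj ->.
have L2_comp Z : measurable_fun setT Z -> P (Z @^-1` ~` range xs) = 0%E ->
    Defs.nondegenerate P Z -> L2 P (g \o Z).
  move=> mZ Z_xs nZ; split.
    exact: Lfun2_bounded (measurableT_comp mg mZ) (fun w => g_bound (Z w)).
  exact: nondegenerate_comp mZ mg measurable_range Z_xs g_inj nZ.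
rewrite (_ : a = g \o xs); last by apply/funext => k; rewrite /= g_xs.
by rewrite -Corr_comp_joint //; apply: corr_r => //; exact: L2_comp.
Qed.

End finite_valued_pair.

Theorem lemma4 (d : measure_display) (T : measurableType d) (R : realType)
  (P : probability T R) (X Y : T -> R) (x1 x2 x3 : R) :
  x1 != x2 -> x1 != x3 -> x2 != x3 ->
  Supp P Y = [set x1; x2; x3] ->
  Supp P X `<=` Supp P Y ->
  IC P X Y ->
  same_distribution P X Y \/ Corr P X Y = 0.
Proof.
move=> n12 n13 n23 SuppY SuppXY [r [_ ICr]].
have [[L2X nX] [[L2Y _] [CorrXY _]]] := ICr.
have mX : measurable_fun setT X by have := sub_Lfun_mfun L2X; rewrite inE.
have mY : measurable_fun setT Y by have := sub_Lfun_mfun L2Y; rewrite inE.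
have xs_inj := triple_inj n12 n13 n23.
have finS := finite_set3 x1 x2 x3; have mS := closed_measurable (finite_set_closed finS).
rewrite -range_triple in SuppY finS mS; set xs := triple x1 x2 x3 in xs_inj SuppY finS mS.
have Y_xs : P (Y @^-1` ~` range xs) = 0%E.
  by apply: Supp_sub_null_compl mY mS _; rewrite SuppY.
have X_xs : P (X @^-1` ~` range xs) = 0%E.
  by apply: Supp_sub_null_compl mX mS _; rewrite -SuppY.
have Y_atoms j : 0 < margY (joint_pmf P xs X Y) j.
  rewrite -lte_fin -(probability_atomY xs_inj mX mY X_xs Y_xs).
  by apply: Supp_atom_gt0 mY finS Y_xs _; rewrite SuppY; exists j.
have X_not_atom i : margX (joint_pmf P xs X Y) i != 1.
  apply/eqP => Xi1; apply: nX; exists (xs i).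
  by rewrite (probability_atomX xs_inj mX mY X_xs Y_xs) Xi1.
have [r0|eq_marg] := pmf3_corr_constant (joint_pmf_total xs_inj mX mY X_xs Y_xs)
  Y_atoms X_not_atom (IC_r_pmf_corr xs_inj mX mY X_xs Y_xs ICr).
  by right; rewrite CorrXY r0.
by left; exact: same_distribution_of_marg xs_inj mX mY X_xs Y_xs eq_marg.
Qed.
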